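(* Let $(X,d)$ be a metric space, let $\mathcal F\subseteq\mathcal S$ be nonempty, and let $V\subseteq X$ be open with $V\subseteq\overline{A_{\mathcal F}(u,\le t)}$ for all $u\in V$ and all $t>0$. Then $V\subseteq\overline{A_{\mathcal F}(u,t)}$ for all $u\in V$ and all $t>0$. In particular, if $\overline{A_{\operatorname{Sat}(\mathcal F)}(u,\le t)}=X$ for all $u\in X$, $t>0$, then $\overline{A_{\mathcal F}(u,t)}=X$ for all $u\in X$, $t>0$.
   Context: Let $(X,d)$ be a metric space and $\dagger\notin X$ an extra point. A continuous local semigroup on $X$ is a map $(t,u)\mapsto\Phi_tu:[0,\infty)\times X\to X\cup\{\dagger\}$ such that for every $u\in X$ there is $T_u\in(0,\infty]$ with: (i) $\Phi_tu\in X$ for $t<T_u$ and $\Phi_tu=\dagger$ for $t\ge T_u$; (ii) $\Phi_0u=u$, and whenever $s,t\ge 0$ with $s+t<T_u$ one has $t<T_{\Phi_su}$ and $\Phi_{t+s}u=\Phi_t\Phi_su$; (iii) for every $t<T_u$ and $\varepsilon>0$ there is $\delta>0$ such that $|t-t'|+d(u,u')<\delta$ implies $t'<T_{u'}$ and $d(\Phi_tu,\Phi_{t'}u')<\varepsilon$. $\mathcal S$ is the set of all such. Compositions $\Phi^n_{t_n}\cdots\Phi^1_{t_1}u$ are only considered when every partial composition lies in $X$. For $\mathcal F\subseteq\mathcal S$: $A_{\mathcal F}(u,t)=\{\Phi^n_{t_n}\cdots\Phi^1_{t_1}u:\Phi^j\in\mathcal F,\ t_j>0,\ \sum_jt_j=t\}$,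 $A_{\mathcal F}(u,\le t)=\bigcup_{0<s\le t}A_{\mathcal F}(u,s)$. $\mathcal F\preccurlyeq\mathcal G$ means $\overline{A_{\mathcal F}(u,\le t)}\subseteq\overline{A_{\mathcal G}(u,\le t)}$ for all $u\in X,t>0$, and $\operatorname{Sat}(\mathcal F)=\bigcup_{\mathcal G\preccurlyeq\mathcal F}\mathcal G$. *)

From Stdlib Require Import Reals.
Open Scope R_scope.

Definition is_metric {X : Type} (d : X -> X -> R) : Prop :=
  (forall x y, 0 <= d x y) /\
  (forall x y, d x y = 0 <-> x = y) /\
  (forall x y, d x y = d y x) /\
  (forall x y z, d x z <= d x y + d y z).

Definition is_open {X : Type} (d : X -> X -> R) (V : X -> Prop) : Prop :=
  forall x, V x -> exists r, 0 < r /\ forall y, d x y < r -> V y.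

Definition closure {X : Type} (d : X -> X -> R) (A : X -> Prop) (x : X) : Prop :=
  forall eps, 0 < eps -> exists a, A a /\ d x a < eps.

(* A local semiflow: Phi t u = None encodes the extra point "dagger". *)
Definition flow (X : Type) := R -> X -> option X.

(* t < T, where T : option R encodes (0, +infinity], None = +infinity *)
Definition lt_ext (t : R) (T : option R) : Prop :=
  match T with Some T' => t < T' | None => True end.

Definition pos_ext (T : option R) : Prop :=
  match T with Some T' => 0 < T' | None => True end.

Definition has_lifetime {X : Type} (Phi : flow X) (u : X) (T : option R) : Prop :=
  pos_ext T /\ forall t, 0 <= t -> (Phi t u <> None <-> lt_ext t T).

Definition is_local_semigroup {X : Type} (d : X -> X -> R) (Phi : flow X) : Prop :=
  (forall u, exists T, has_lifetime Phi u T) /\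
  (forall u, Phi 0 u = Some u) /\
  (forall u s t v, 0 <= s -> 0 <= t -> Phi (s + t) u <> None ->
     Phi s u = Some v -> Phi t v <> None /\ Phi (t + s) u = Phi t v) /\
  (forall u t w, 0 <= t -> Phi t u = Some w ->
     forall eps, 0 < eps -> exists delta, 0 < delta /\
       forall t' u', 0 <= t' -> Rabs (t - t') + d u u' < delta ->
         exists w', Phi t' u' = Some w' /\ d w w' < eps).

(* reach F u t y : y = Phi^n_{t_n} ... Phi^1_{t_1} u with n >= 1, Phi^j in F,
   t_j > 0, sum t_j = t, and all partial compositions lying in X. *)
Inductive reach {X : Type} (F : flow X -> Prop) : X -> R -> X -> Prop :=
| reach1 : forall Phi u t y, F Phi -> 0 < t -> Phi t u = Some y -> reach F u t y
| reachS : forall Phi u s v t y, F Phi -> 0 < s -> Phi s u = Some v ->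
    reach F v t y -> reach F u (s + t) y.

Definition A_at {X : Type} (F : flow X -> Prop) (u : X) (t : R) : X -> Prop :=
  fun y => reach F u t y.

Definition A_le {X : Type} (F : flow X -> Prop) (u : X) (t : R) : X -> Prop :=
  fun y => exists s, 0 < s /\ s <= t /\ reach F u s y.

Definition preceq {X : Type} (d : X -> X -> R) (F G : flow X -> Prop) : Prop :=
  forall u t, 0 < t -> forall x, closure d (A_le F u t) x -> closure d (A_le G u t) x.

Definition Sat {X : Type} (d : X -> X -> R) (F : flow X -> Prop) : flow X -> Prop :=
  fun Phi => exists G : flow X -> Prop,
    (forall Psi, G Psi -> is_local_semigroup d Psi) /\ preceq d G F /\ G Phi.

From Stdlib Require Import Reals Lra.
Open Scope R_scope.

(* Fix some Phi in F.  Flowing along Phi for short times keeps points near a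
   point x of V, so from a point near x reached at time s < t we can either
   close the remaining gap t - s with Phi, or flow for a fixed small time h
   back into V and use the density of A_F(., <= t - s - h) in V to return
   near x, having gained at least h time.  Since t - s is bounded, the second
   alternative occurs only finitely often.  For the second claim, points
   reached through Sat(F) lie in the closure of the points reached through F
   in the same time, by continuity of the semiflows in the initial point. *)

Lemma bounded_progress_ind (P : R -> Prop) (Q : Prop) (h t : R) :
  0 < h -> (forall s, P s -> s <= t) ->
  (forall s, P s -> Q \/ exists s', s + h <= s' /\ P s') ->
  forall s, P s -> Q.
Proof.
  intros Hh Hbound Hstep s Ps.
  destruct (INR_archimed h (t - s) Hh) as [n Hn].
  revert s Ps Hn; induction n as [|n IHn]; intros s Ps Hn.
  - simpl in Hn; pose proof (Hbound s Ps); lra.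
  - rewrite S_INR in Hn.
    destruct (Hstep s Ps) as [HQ | [s' [Hs' Ps']]]; [exact HQ |].
    apply (IHn s' Ps'); lra.
Qed.

Section Reachability.

Variables (X : Type) (d : X -> X -> R).

Lemma closure_self (Hd : is_metric d) (A : X -> Prop) x : A x -> closure d A x.
Proof.
  destruct Hd as [_ [Hzero _]].
  intros Ax eps Heps; exists x; split; [exact Ax |].
  rewrite (proj2 (Hzero x x) eq_refl); exact Heps.
Qed.

Lemma closure_trans (Hd : is_metric d) (A B : X -> Prop) x :
  (forall a, A a -> closure d B a) -> closure d A x -> closure d B x.
Proof.
  destruct Hd as [_ [_ [_ Htri]]].
  intros HAB HA eps Heps.
  destruct (HA (eps / 2) ltac:(lra)) as [a [Aa Hxa]].
  destruct (HAB a Aa (eps / 2) ltac:(lra)) as [b [Bb Hab]].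
  exists b; split; [exact Bb |].
  pose proof (Htri x a b); lra.
Qed.

Lemma local_semigroup_near_start (Phi : flow X) x eps :
  is_local_semigroup d Phi -> 0 < eps ->
  exists delta, 0 < delta /\ forall y tau, 0 <= tau -> tau < delta ->
    d x y < delta -> exists z, Phi tau y = Some z /\ d x z < eps.
Proof.
  intros [_ [Hid [_ Hcont]]] Heps.
  destruct (Hcont x 0 x (Rle_refl 0) (Hid x) eps Heps) as [delta [Hdelta Hnear]].
  exists (delta / 2); split; [lra |].
  intros y tau Htau Htau' Hy.
  apply Hnear; [exact Htau |].
  rewrite Rabs_minus_sym, Rminus_0_r, Rabs_pos_eq; lra.
Qed.

Variable F : flow X -> Prop.
Hypothesis HFS : forall Phi, F Phi -> is_local_semigroup d Phi.

Lemma reach_trans u s v t w :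
  reach F u s v -> reach F v t w -> reach F u (s + t) w.
Proof.
  intros Huv; revert t w; induction Huv; intros t' w Hw.
  - eapply reachS; eauto.
  - rewrite Rplus_assoc; eapply reachS; eauto.
Qed.

Lemma A_le_monotone u s t y : s <= t -> A_le F u s y -> A_le F u t y.
Proof. intros Hst [r [Hr [Hrs Hreach]]]; exists r; repeat split; auto; lra. Qed.

Lemma reach_continuous_start v t a eps :
  reach F v t a -> 0 < eps -> exists delta, 0 < delta /\
    forall v', d v v' < delta -> exists a', reach F v' t a' /\ d a a' < eps.
Proof.
  intros Hreach; revert eps.
  induction Hreach as [Phi u t y HPhi Ht Hy | Phi u s v t y HPhi Hs Hv Hreach IH];
    intros eps Heps; destruct (HFS Phi HPhi) as [_ [_ [_ Hcont]]].
  - destruct (Hcont u t y (Rlt_le _ _ Ht) Hy eps Heps) as [delta [Hdelta Hnear]].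
    exists delta; split; [exact Hdelta |]; intros v' Hv'.
    destruct (Hnear t v' (Rlt_le _ _ Ht)) as [y' [Hy' Hyy']].
    { rewrite Rminus_diag, Rabs_R0; lra. }
    exists y'; split; [eapply reach1; eauto | exact Hyy'].
  - destruct (IH eps Heps) as [delta1 [Hdelta1 Hnear1]].
    destruct (Hcont u s v (Rlt_le _ _ Hs) Hv delta1 Hdelta1)
      as [delta [Hdelta Hnear]].
    exists delta; split; [exact Hdelta |]; intros u' Hu'.
    destruct (Hnear s u' (Rlt_le _ _ Hs)) as [v' [Hv' Hvv']].
    { rewrite Rminus_diag, Rabs_R0; lra. }
    destruct (Hnear1 v' Hvv') as [y' [Hy' Hyy']].
    exists y'; split; [eapply reachS; eauto | exact Hyy'].
Qed.

Lemma closure_A_le_cat u s v t a :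
  closure d (A_le F u s) v -> A_le F v t a -> closure d (A_le F u (s + t)) a.
Proof.
  intros Hv [r [Hr [Hrt Hreach]]] eps Heps.
  destruct (reach_continuous_start v r a eps Hreach Heps)
    as [delta [Hdelta Hnear]].
  destruct (Hv delta Hdelta) as [v' [[r' [Hr' [Hr's Hreach']]] Hvv']].
  destruct (Hnear v' Hvv') as [a' [Ha' Haa']].
  exists a'; split; [| exact Haa'].
  exists (r' + r); repeat split; [lra | lra |].
  eapply reach_trans; eauto.
Qed.

Lemma Sat_flow_closure (Hd : is_metric d) Phi u s v :
  Sat d F Phi -> 0 < s -> Phi s u = Some v -> closure d (A_le F u s) v.
Proof.
  intros [G [_ [HGF HG]]] Hs Hv.
  apply (HGF u s Hs), (closure_self Hd).
  exists s; repeat split; [lra | lra |]; eapply reach1; eauto.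
Qed.

Lemma Sat_reach_closure (Hd : is_metric d) u s y :
  reach (Sat d F) u s y -> closure d (A_le F u s) y.
Proof.
  induction 1 as [Phi u t y HPhi Ht Hy | Phi u s v t y HPhi Hs Hv Hreach IH].
  - exact (Sat_flow_closure Hd Phi u t y HPhi Ht Hy).
  - apply (closure_trans Hd _ _ _ (fun a Ha => closure_A_le_cat u s v t a
      (Sat_flow_closure Hd Phi u s v HPhi Hs Hv) Ha) IH).
Qed.

Lemma A_le_Sat_closure (Hd : is_metric d) u t a :
  A_le (Sat d F) u t a -> closure d (A_le F u t) a.
Proof.
  intros [s [Hs [Hst Ha]]].
  apply (closure_trans Hd (A_le F u s)); [| exact (Sat_reach_closure Hd u s a Ha)].
  intros b Hb; exact (closure_self Hd _ b (A_le_monotone u s t b Hst Hb)).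
Qed.

Lemma A_at_dense_of_A_le_dense :
  (exists Phi, F Phi) -> forall V : X -> Prop, is_open d V ->
  (forall u t, V u -> 0 < t -> forall x, V x -> closure d (A_le F u t) x) ->
  forall u t, V u -> 0 < t -> forall x, V x -> closure d (A_at F u t) x.
Proof.
  intros [Phi HPhi] V Hopen Hdense u t Hu Ht x Hx eps Heps.
  destruct (Hopen x Hx) as [r [Hr HrV]].
  destruct (local_semigroup_near_start Phi x (Rmin eps r) (HFS Phi HPhi)
              ltac:(apply Rmin_pos; lra)) as [delta [Hdelta Hnear]].
  pose proof (Rmin_l eps r); pose proof (Rmin_r eps r).
  assert (Hrho : 0 < Rmin delta eps) by (apply Rmin_pos; lra).
  pose proof (Rmin_l delta eps); pose proof (Rmin_r delta eps).
  set (rho := Rmin delta eps) in *.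
  pose (P s := s <= t /\ exists y, reach F u s y /\ d x y < rho).
  destruct (Hdense u t Hu Ht x Hx rho Hrho) as [y0 [[s0 [Hs0 [Hs0t Hy0]]] Hxy0]].
  apply (bounded_progress_ind P _ (delta / 2) t) with s0;
    [lra | now intros s [] | | split; [exact Hs0t | exists y0; auto]].
  intros s [Hst [y [Hy Hxy]]].
  destruct (Rlt_or_le (t - s) delta) as [Hclose | Hfar].
  - left; destruct (Req_dec s t) as [<- | Hne]; [exists y; split; auto; lra |].
    destruct (Hnear y (t - s) ltac:(lra) Hclose ltac:(lra)) as [z [Hz Hxz]].
    exists z; split; [| lra].
    replace t with (s + (t - s)) by ring.
    eapply reach_trans; [exact Hy | eapply reach1; eauto; lra].
  - right.
    destruct (Hnear y (delta / 2) ltac:(lra) ltac:(lra) ltac:(lra))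
      as [z [Hz Hxz]].
    destruct (Hdense z (t - s - delta / 2) (HrV z ltac:(lra)) ltac:(lra) x Hx
                rho Hrho) as [a [[s1 [Hs1 [Hs1t Ha]]] Hxa]].
    exists (s + (delta / 2 + s1)); split; [lra | split; [lra |]].
    exists a; split; [| exact Hxa].
    eapply reach_trans; [exact Hy | eapply reachS; eauto; lra].
Qed.

End Reachability.

Theorem lemma3p5 (X : Type) (d : X -> X -> R) (Hd : is_metric d)
  (F : flow X -> Prop)
  (HFS : forall Phi, F Phi -> is_local_semigroup d Phi)
  (HFne : exists Phi, F Phi) :
  (forall V : X -> Prop, is_open d V ->
     (forall u t, V u -> 0 < t -> forall x, V x -> closure d (A_le F u t) x) ->
     forall u t, V u -> 0 < t -> forall x, V x -> closure d (A_at F u t) x)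
  /\
  ((forall u t, 0 < t -> forall x, closure d (A_le (Sat d F) u t) x) ->
     forall u t, 0 < t -> forall x, closure d (A_at F u t) x).
Proof.
  split; [exact (A_at_dense_of_A_le_dense X d F HFS HFne) |].
  intros HSat u t Ht x.
  apply (A_at_dense_of_A_le_dense X d F HFS HFne (fun _ => True)); auto.
  - intros y _; exists 1; split; [lra | auto].
  - intros u' t' _ Ht' x' _.
    apply (closure_trans X d Hd (A_le (Sat d F) u' t')); [| exact (HSat u' t' Ht' x')].
    exact (A_le_Sat_closure X d F HFS Hd u' t').
Qed.
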